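(* Let $\alpha\in(0,1]$, $0\le a<b$, and let $f:[a,b]\to\mathbb{R}$ be $\alpha$-fractional differentiable such that $D_\alpha f$ is increasing and $f$ is decreasing on $[a,b]$. Then $$ f\left(\frac{a+b}{2}\right)\le\frac{\alpha}{b^\alpha-a^\alpha}\int_a^b f(s)\,d_\alpha s\le f(b)+f(a)-f\left(\frac{a+b}{2}\right). $$
   Context: The conformable $\alpha$-fractional derivative is $D_\alpha f(t):=\lim_{\varepsilon\to 0}\frac{f(t+\varepsilon t^{1-\alpha})-f(t)}{\varepsilon}$ for $t>0$, $D_\alpha f(0):=\lim_{t\to0^+}D_\alpha f(t)$. Integrals: $\int_a^b h(s)\,d_\alpha s:=\int_a^b h(s)s^{\alpha-1}\,ds$. *)

From Stdlib Require Import Reals Lra.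
From Coquelicot Require Import Coquelicot.
Open Scope R_scope.

(* Real power x^y for x >= 0 with the convention 0^y = 0 (used for y > 0).
   (Stdlib's Rpower 0 y = exp (y * ln 0) = 1, which is wrong at 0.) *)
Definition rpow (x y : R) : R := if Rle_dec x 0 then 0 else Rpower x y.

Definition conf_deriv_at (a b alpha : R) (f : R -> R) (t l : R) : Prop :=
  forall e : R, 0 < e -> exists d : R, 0 < d /\
    forall h : R, h <> 0 -> Rabs h < d ->
      a <= t + h * rpow t (1 - alpha) <= b ->
      Rabs ((f (t + h * rpow t (1 - alpha)) - f t) / h - l) < e.

Definition conf_deriv_on (a b alpha : R) (f Df : R -> R) : Prop :=
  (forall t : R, a <= t <= b -> 0 < t -> conf_deriv_at a b alpha f t (Df t)) /\
  (a = 0 -> filterlim Df (at_right 0) (locally (Df 0))).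

From Stdlib Require Import Reals Lra Classical.
From Coquelicot Require Import Coquelicot.
Open Scope R_scope.

(* Substitute [X = s^alpha]: [F X := f (X^(1/alpha))] has derivative [Df s / alpha], which is
   nondecreasing, so [F] is convex (and nonincreasing) on [[a^alpha, b^alpha]], and the weighted
   integral equals [(1/alpha) * int F]. The two inequalities are then Hermite-Hadamard: [F] lies
   above its tangent at [m^alpha], where [m = (a+b)/2] and [m^alpha >= (a^alpha + b^alpha)/2] by
   concavity of the power, and below its chord; the chord bound survives a jump of [f] at [a],
   since [f] is nonincreasing. The improper integral at [a] converges because
   [int_x^b (f s - f b) s^(alpha-1) ds] is monotone in [x] and bounded. We work in [s] directly,
   with [f s - c/alpha * s^alpha] in place of [F X - c X]. *)

(** * Real powers *)

Lemma rpow_pos x y : 0 < x -> rpow x y = Rpower x y.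
Proof. intros Hx. unfold rpow. destruct (Rle_dec x 0); [lra | reflexivity]. Qed.

Lemma rpow_0 y : rpow 0 y = 0.
Proof. unfold rpow. destruct (Rle_dec 0 0); [reflexivity | lra]. Qed.

Lemma rpow_lt a b al : 0 <= a < b -> 0 < al -> rpow a al < rpow b al.
Proof.
  intros Hab Hal. rewrite (rpow_pos b) by lra.
  destruct (Req_dec a 0) as [-> | Ha].
  - rewrite rpow_0. apply exp_pos.
  - rewrite rpow_pos by lra. apply Rlt_Rpower_l; lra.
Qed.

Lemma Rpower_inv_exponent t al : Rpower t (al - 1) = / Rpower t (1 - al).
Proof. rewrite <- Rpower_Ropp. f_equal. ring. Qed.

Lemma is_derive_Rpower x y : 0 < x -> is_derive (fun s => Rpower s y) x (y * Rpower x (y - 1)).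
Proof. intros Hx. apply is_derive_Reals, derivable_pt_lim_power, Hx. Qed.

Lemma continuous_Rpower x y : 0 < x -> continuous (fun s => Rpower s y) x.
Proof.
  intros Hx. apply (ex_derive_continuous (fun s => Rpower s y)).
  eexists. now apply is_derive_Rpower.
Qed.

Lemma Rpower_at_right a al : 0 <= a -> 0 < al ->
  filterlim (fun x => Rpower x al) (at_right a) (locally (rpow a al)).
Proof.
  intros Ha Hal. destruct (Req_dec a 0) as [-> | Ha0].
  - rewrite rpow_0. apply filterlim_locally. intros eps.
    (* below [eps ^ (1/al)] the power stays below [eps] *)
    exists (mkposreal (Rpower eps (/ al)) (exp_pos _)). intros x Hx Hx0.
    change (Rabs (x - 0) < Rpower eps (/ al)) in Hx. change (Rabs (Rpower x al - 0) < eps).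
    rewrite Rminus_0_r, Rabs_pos_eq in Hx by lra.
    rewrite Rminus_0_r, Rabs_pos_eq by (left; apply exp_pos).
    replace (pos eps) with (Rpower (Rpower eps (/ al)) al).
    + apply Rlt_Rpower_l; lra.
    + rewrite Rpower_mult, Rinv_l, Rpower_1 by (try apply cond_pos; lra). reflexivity.
  - rewrite rpow_pos by lra.
    eapply filterlim_filter_le_1; [apply filter_le_within |].
    apply continuous_Rpower. lra.
Qed.

Lemma Rpower_bernoulli t al : 0 < t -> 0 < al <= 1 -> Rpower t al <= 1 + al * (t - 1).
Proof.
  intros Ht Hal. set (s := 1 + al * (t - 1)).
  assert (Hs : 0 < s) by (unfold s; nra).
  (* [ln y <= y - 1] at [t/s] and [1/s], weighted by [al] and [1 - al], gives [al ln t <= ln s]. *)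
  assert (Hln : forall y, 0 < y -> ln y <= y - 1).
  { intros y Hy. pose proof (exp_ineq1_le (ln y)). rewrite exp_ln in * by exact Hy. lra. }
  pose proof (Hln (t / s) ltac:(apply Rdiv_lt_0_compat; lra)) as H1.
  pose proof (Hln (/ s) ltac:(apply Rinv_0_lt_compat; lra)) as H2.
  rewrite ln_div in H1 by lra. rewrite ln_Rinv in H2 by lra.
  assert (Hsum : al * (t / s - 1) + (1 - al) * (/ s - 1) = 0).
  { replace (al * (t / s - 1) + (1 - al) * (/ s - 1)) with ((al * t + (1 - al)) / s - 1)
      by (field; lra).
    replace (al * t + (1 - al)) with s by (unfold s; ring). field; lra. }
  assert (al * ln t <= ln s).
  { apply Rmult_le_compat_l with (r := al) in H1; [| lra].
    apply Rmult_le_compat_l with (r := 1 - al) in H2; [| lra]. lra. }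
  unfold Rpower. rewrite <- (exp_ln s) by lra.
  destruct (Req_dec (al * ln t) (ln s)) as [-> | ]; [lra | left; apply exp_increasing; lra].
Qed.

Lemma rpow_le_tangent x m al : 0 <= x -> 0 < m -> 0 < al <= 1 ->
  rpow x al <= Rpower m al * (1 + al * (x / m - 1)).
Proof.
  intros Hx Hm Hal. pose proof (exp_pos (al * ln m)) as HM. fold (Rpower m al) in HM.
  destruct (Req_dec x 0) as [-> | Hx0].
  - rewrite rpow_0. replace (0 / m) with 0 by (field; lra). nra.
  - rewrite rpow_pos by lra.
    replace x with (x / m * m) at 1 by (field; lra).
    rewrite <- Rpower_mult_distr by (try apply Rdiv_lt_0_compat; lra).
    rewrite (Rmult_comm (Rpower (x / m) al)).
    apply Rmult_le_compat_l; [lra |].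
    apply Rpower_bernoulli; [apply Rdiv_lt_0_compat |]; lra.
Qed.

Lemma rpow_midpoint a b al : 0 <= a -> 0 < b -> 0 < al <= 1 ->
  (rpow a al + rpow b al) / 2 <= rpow ((a + b) / 2) al.
Proof.
  intros Ha Hb Hal. set (m := (a + b) / 2).
  assert (Hm : 0 < m) by (unfold m; lra).
  pose proof (rpow_le_tangent a m al Ha Hm Hal) as HA.
  pose proof (rpow_le_tangent b m al ltac:(lra) Hm Hal) as HB.
  rewrite (rpow_pos m) by exact Hm.
  replace (Rpower m al) with ((Rpower m al * (1 + al * (a / m - 1)) +
    Rpower m al * (1 + al * (b / m - 1))) / 2) by (unfold m; field; lra).
  lra.
Qed.

(** * One-sided derivatives within an interval *)

Definition deriv_within (a b : R) (f : R -> R) (t l : R) : Prop :=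
  forall e : R, 0 < e -> exists d : R, 0 < d /\
    forall h : R, h <> 0 -> Rabs h < d -> a <= t + h <= b ->
      Rabs ((f (t + h) - f t) / h - l) < e.

(* The conformable quotient with step [h] is [t^(1-al)] times the ordinary
   quotient with step [h t^(1-al)]. *)
Lemma conf_deriv_at_deriv_within a b al f t l : 0 < t ->
  conf_deriv_at a b al f t l -> deriv_within a b f t (l * Rpower t (al - 1)).
Proof.
  intros Ht Hconf e He.
  set (k := Rpower t (1 - al)).
  assert (Hk : 0 < k) by apply exp_pos.
  destruct (Hconf (e * k) ltac:(nra)) as [d [Hd Hquot]].
  exists (d * k). split; [nra |]. intros h Hh0 Hh Hth.
  specialize (Hquot (h / k)). rewrite rpow_pos in Hquot by exact Ht. fold k in Hquot.
  replace (t + h / k * k) with (t + h) in Hquot by (field; lra).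
  assert (Hq : Rabs ((f (t + h) - f t) / (h / k) - l) < e * k).
  { apply Hquot; [| | exact Hth].
    - intros E. apply Hh0. replace h with (h / k * k) by (field; lra). rewrite E. ring.
    - rewrite Rabs_div, (Rabs_pos_eq k) by lra.
      apply Rmult_lt_reg_r with k; [exact Hk |]. unfold Rdiv. rewrite Rmult_assoc, Rinv_l; lra. }
  rewrite Rpower_inv_exponent. fold k.
  replace ((f (t + h) - f t) / h - l * / k) with (((f (t + h) - f t) / (h / k) - l) / k)
    by (field; lra).
  rewrite Rabs_div, (Rabs_pos_eq k) by lra.
  apply Rmult_lt_reg_r with k; [exact Hk |]. unfold Rdiv. rewrite Rmult_assoc, Rinv_l; lra.
Qed.

Lemma deriv_within_interior a b f t l : a < t < b ->
  deriv_within a b f t l -> derivable_pt_lim f t l.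
Proof.
  intros Ht Hf e He. destruct (Hf e He) as [d [Hd Hquot]].
  assert (Hd' : 0 < Rmin d (Rmin (t - a) (b - t))) by (repeat apply Rmin_pos; lra).
  exists (mkposreal _ Hd'). intros h Hh0 Hh. simpl in Hh.
  pose proof (Rmin_l d (Rmin (t - a) (b - t))).
  pose proof (Rmin_l (t - a) (b - t)). pose proof (Rmin_r (t - a) (b - t)).
  pose proof (Rmin_r d (Rmin (t - a) (b - t))).
  apply Hquot; [exact Hh0 | lra |].
  apply Rabs_def2 in Hh. lra.
Qed.

Lemma deriv_within_continuous a b f t l p q : a <= p -> q <= b -> p <= t <= q ->
  deriv_within a b f t l -> filterlim f (within (fun y => p <= y <= q) (locally t)) (locally (f t)).
Proof.
  intros Hp Hq Ht Hf. apply filterlim_locally. intros e.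
  destruct (Hf 1 Rlt_0_1) as [d [Hd Hquot]].
  set (M := Rabs l + 1).
  assert (HM : 0 < M) by (unfold M; pose proof (Rabs_pos l); lra).
  assert (Hd' : 0 < Rmin d (e / M))
    by (apply Rmin_pos; [lra | apply Rdiv_lt_0_compat; [apply cond_pos | lra]]).
  exists (mkposreal _ Hd'). intros y Hy Hpq.
  change (Rabs (y - t) < Rmin d (e / M)) in Hy. change (Rabs (f y - f t) < e).
  pose proof (Rmin_l d (e / M)). pose proof (Rmin_r d (e / M)).
  destruct (Req_dec y t) as [-> | Hyt].
  { rewrite Rminus_diag, Rabs_R0. apply cond_pos. }
  (* a quotient within [1] of [l] is bounded by [M], so [|f y - f t| <= M |y - t|] *)
  set (h := y - t).
  assert (Hh0 : h <> 0) by (unfold h; lra).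
  specialize (Hquot h Hh0 ltac:(unfold h; lra) ltac:(unfold h; lra)).
  replace (t + h) with y in Hquot by (unfold h; lra).
  assert (Hbound : Rabs ((f y - f t) / h) < M).
  { unfold M. replace ((f y - f t) / h) with (((f y - f t) / h - l) + l) by ring.
    pose proof (Rabs_triang ((f y - f t) / h - l) l). lra. }
  replace (f y - f t) with ((f y - f t) / h * h) by (field; exact Hh0).
  rewrite Rabs_mult.
  apply Rle_lt_trans with (M * Rabs h).
  - apply Rmult_le_compat_r; [apply Rabs_pos | lra].
  - replace (pos e) with (M * (e / M)) by (field; lra).
    apply Rmult_lt_compat_l; [exact HM | unfold h; lra].
Qed.

Definition clamp (p q x : R) : R := Rmax p (Rmin x q).

Lemma clamp_in p q x : p <= q -> p <= clamp p q x <= q.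
Proof. intros H. unfold clamp, Rmax, Rmin. repeat destruct Rle_dec; lra. Qed.

Lemma clamp_id p q x : p <= x <= q -> clamp p q x = x.
Proof. intros H. unfold clamp, Rmax, Rmin. repeat destruct Rle_dec; lra. Qed.

Lemma clamp_dist p q x y : Rabs (clamp p q y - clamp p q x) <= Rabs (y - x).
Proof.
  unfold clamp, Rmax, Rmin, Rabs.
  repeat destruct Rle_dec; repeat destruct Rcase_abs; lra.
Qed.

Lemma continuous_clamp p q (h : R -> R) z : p <= q ->
  continuous_on (fun y => p <= y <= q) h -> continuous (fun y => h (clamp p q y)) z.
Proof.
  intros Hpq Hh. unfold continuous.
  eapply filterlim_comp; [| apply (Hh _ (clamp_in p q z Hpq))].
  intros P [eps HP]. exists eps. intros y Hy.
  apply HP; [| apply clamp_in, Hpq].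
  change (Rabs (clamp p q y - clamp p q z) < eps).
  eapply Rle_lt_trans; [apply clamp_dist | exact Hy].
Qed.

Lemma continuous_on_plus D (h k : R -> R) :
  continuous_on D h -> continuous_on D k -> continuous_on D (fun x => h x + k x).
Proof.
  intros Hh Hk x Dx.
  exact (filterlim_comp_2 h k Rplus (Hh x Dx) (Hk x Dx) (filterlim_plus (h x) (k x))).
Qed.

Lemma continuous_on_mult D (h k : R -> R) :
  continuous_on D h -> continuous_on D k -> continuous_on D (fun x => h x * k x).
Proof.
  intros Hh Hk x Dx.
  exact (filterlim_comp_2 h k Rmult (Hh x Dx) (Hk x Dx) (@filterlim_mult R_AbsRing (h x) (k x))).
Qed.

Lemma continuous_on_Rpower p q c y : 0 < p ->
  continuous_on (fun s => p <= s <= q) (fun s => c * Rpower s y).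
Proof.
  intros Hp. apply continuous_on_forall. intros x Hx.
  apply (continuous_mult (fun _ => c) (fun s => Rpower s y));
    [apply continuous_const | apply continuous_Rpower; lra].
Qed.

(* [MVT_gen] asks for two-sided continuity on [[p, q]], which the clamped function has. *)
Lemma mvt_continuous_on h dh p q : p < q ->
  (forall x, p < x < q -> derivable_pt_lim h x (dh x)) ->
  continuous_on (fun y => p <= y <= q) h ->
  exists c, p <= c <= q /\ h q - h p = dh c * (q - p).
Proof.
  intros Hpq Hd Hc.
  set (g := fun y => h (clamp p q y)).
  assert (Hg : forall x, p <= x <= q -> h x = g x)
    by (intros x Hx; unfold g; rewrite clamp_id; [reflexivity | lra]).
  destruct (MVT_gen g p q dh) as [c [Hc1 Hc2]]; rewrite ?Rmin_left, ?Rmax_right in * by lra.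
  - intros x Hx. apply (is_derive_ext_loc h); [| apply is_derive_Reals, Hd, Hx].
    assert (Hr : 0 < Rmin (x - p) (q - x)) by (apply Rmin_pos; lra).
    exists (mkposreal _ Hr). intros y Hy. apply Hg.
    change (Rabs (y - x) < Rmin (x - p) (q - x)) in Hy. apply Rabs_def2 in Hy.
    pose proof (Rmin_l (x - p) (q - x)). pose proof (Rmin_r (x - p) (q - x)). lra.
  - intros x Hx. apply continuity_pt_filterlim, continuous_clamp; [lra | exact Hc].
  - exists c. split; [exact Hc1 |]. rewrite !Hg by lra. exact Hc2.
Qed.

Lemma ex_RInt_continuous_on (h : R -> R) p q : p <= q ->
  continuous_on (fun y => p <= y <= q) h -> ex_RInt h p q.
Proof.
  intros Hpq Hc. apply (ex_RInt_ext (V := R_CompleteNormedModule) (fun y => h (clamp p q y))).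
  { rewrite Rmin_left, Rmax_right by lra. intros x Hx. rewrite clamp_id; [reflexivity | lra]. }
  apply (ex_RInt_continuous (V := R_CompleteNormedModule)). intros z _.
  apply continuous_clamp; assumption.
Qed.

(** * Improper integrals at a left endpoint *)

Lemma at_right_below a c : a < c -> at_right a (fun x => a < x < c).
Proof.
  intros Hac. exists (mkposreal (c - a) ltac:(lra)). intros x Hx Hax.
  change (Rabs (x - a) < c - a) in Hx. apply Rabs_def2 in Hx. lra.
Qed.

Lemma antitone_at_right_cvg (K : R -> R) a c M : a < c ->
  (forall x y, a < x -> x <= y -> y < c -> K y <= K x) ->
  (forall x, a < x < c -> K x <= M) ->
  exists S, filterlim K (at_right a) (locally S).
Proof.
  intros Hac Hmono Hbound.
  set (E := fun z => exists x, a < x < c /\ z = K x).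
  destruct (completeness E) as [S [HSub HSlub]].
  { exists M. intros z [x [Hx ->]]. apply Hbound, Hx. }
  { exists (K ((a + c) / 2)), ((a + c) / 2). split; [lra | reflexivity]. }
  exists S. apply filterlim_locally. intros eps.
  assert (Hx0 : exists x0, a < x0 < c /\ S - eps < K x0).
  { apply NNPP. intros Hno.
    assert (S <= S - eps); [| pose proof (cond_pos eps); lra].
    apply HSlub. intros z [x [Hx ->]]. apply Rnot_lt_le. intros Hlt. apply Hno. now exists x. }
  destruct Hx0 as [x0 [Hx0 HKx0]].
  apply (filter_imp (fun y => a < y < x0)); [| now apply at_right_below].
  intros y Hy. change (Rabs (K y - S) < eps).
  assert (K y <= S) by (apply HSub; exists y; split; [lra | reflexivity]).
  assert (K x0 <= K y) by (apply Hmono; lra).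
  apply Rabs_def1; lra.
Qed.

Lemma is_RInt_gen_at_right (g : R -> R) a b I : a < b ->
  (forall x, a < x < b -> ex_RInt g x b) ->
  filterlim (fun x => RInt g x b) (at_right a) (locally I) ->
  is_RInt_gen g (at_right a) (at_point b) I.
Proof.
  intros Hab Hex Hlim P HP.
  apply Filter_prod with (Q := fun x => a < x < b /\ P (RInt g x b)) (R := fun y => y = b).
  - apply filter_and; [now apply at_right_below | exact (Hlim P HP)].
  - reflexivity.
  - intros x y [Hx HPx] ->. exists (RInt g x b). split; [| exact HPx].
    apply (RInt_correct (V := R_CompleteNormedModule)), Hex, Hx.
Qed.

(** * Weighted integrals of affine functions of [s^al] *)

(* The primitive of [(u + v s^al) s^(al-1)] is [(u X + v X^2 / 2) / al] with [X = s^al]. *)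
Definition affine_power_integral (al u v X Y : R) : R :=
  (u * (Y - X) + v * (Y ^ 2 - X ^ 2) / 2) / al.

Lemma is_RInt_affine_power al u v x y : 0 < x <= y -> 0 < al ->
  is_RInt (fun s => (u + v * Rpower s al) * rpow s (al - 1)) x y
    (affine_power_integral al u v (Rpower x al) (Rpower y al)).
Proof.
  intros Hxy Hal.
  set (G := fun X => (u * X + v * X ^ 2 / 2) / al).
  set (dF := fun s => (u + v * Rpower s al) * Rpower s (al - 1)).
  replace (affine_power_integral al u v (Rpower x al) (Rpower y al))
    with (minus (G (Rpower y al)) (G (Rpower x al)))
    by (unfold minus, plus, opp, G, affine_power_integral; simpl; field; lra).
  apply (is_RInt_ext (V := R_CompleteNormedModule) dF).
  { rewrite Rmin_left, Rmax_right by lra. intros s Hs. unfold dF.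
    rewrite rpow_pos by lra. reflexivity. }
  apply (is_RInt_derive (V := R_CompleteNormedModule) (fun s => G (Rpower s al)) dF);
    rewrite Rmin_left, Rmax_right by lra; intros s Hs.
  - replace (dF s) with (scal (al * Rpower s (al - 1)) ((u + v * Rpower s al) / al))
      by (unfold dF, scal; simpl; unfold mult; simpl; field; lra).
    apply (is_derive_comp G (fun s => Rpower s al)).
    + unfold G. auto_derive; [exact I | field; lra].
    + apply is_derive_Rpower. lra.
  - unfold dF. apply (ex_derive_continuous (fun s => (u + v * Rpower s al) * Rpower s (al - 1))).
    apply (ex_derive_mult (fun s => u + v * Rpower s al) (fun s => Rpower s (al - 1))).
    + apply (ex_derive_plus (fun _ => u) (fun s => v * Rpower s al)); [apply ex_derive_const |].
      apply (ex_derive_scal (fun s => Rpower s al)). eexists. apply is_derive_Rpower. lra.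
    + eexists. apply is_derive_Rpower. lra.
Qed.

Lemma affine_power_integral_mean al u v X Y : 0 < al -> X <> Y ->
  al / (Y - X) * affine_power_integral al u v X Y = u + v * ((X + Y) / 2).
Proof. intros Hal HXY. unfold affine_power_integral. field. split; lra. Qed.

Lemma affine_power_integral_at_right al u v a Y : 0 <= a -> 0 < al ->
  filterlim (fun x => affine_power_integral al u v (Rpower x al) Y) (at_right a)
    (locally (affine_power_integral al u v (rpow a al) Y)).
Proof.
  intros Ha Hal.
  apply (filterlim_comp _ _ _ (fun x => Rpower x al) (fun X => affine_power_integral al u v X Y)
    _ (locally (rpow a al))); [apply Rpower_at_right; assumption |].
  apply (ex_derive_continuous (fun X => affine_power_integral al u v X Y)).
  unfold affine_power_integral. auto_derive. exact I.
Qed.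

(** * Conformably convex decreasing functions *)

Section ConformableConvex.

Variables (alpha a b : R) (f Df : R -> R).
Hypothesis Halpha : 0 < alpha <= 1.
Hypothesis Ha : 0 <= a.
Hypothesis Hab : a < b.
Hypothesis Hconf : conf_deriv_on a b alpha f Df.
Hypothesis HDf : forall x y, a <= x -> x <= y -> y <= b -> Df x <= Df y.
Hypothesis Hf : forall x y, a <= x -> x <= y -> y <= b -> f y <= f x.

Let shifted (c s : R) : R := f s - c / alpha * Rpower s alpha.

Lemma f_deriv_within t : a <= t <= b -> 0 < t ->
  deriv_within a b f t (Df t * Rpower t (alpha - 1)).
Proof. intros Ht Ht0. apply conf_deriv_at_deriv_within; [exact Ht0 |]. now apply Hconf. Qed.

Lemma f_derivable t : a < t < b -> derivable_pt_lim f t (Df t * Rpower t (alpha - 1)).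
Proof. intros Ht. apply (deriv_within_interior a b); [exact Ht |]. apply f_deriv_within; lra. Qed.

Lemma f_continuous_on p q : a <= p -> 0 < p -> q <= b ->
  continuous_on (fun s => p <= s <= q) f.
Proof.
  intros Hp Hp0 Hq t Ht.
  apply (deriv_within_continuous a b f t (Df t * Rpower t (alpha - 1)) p q); try lra.
  apply f_deriv_within; lra.
Qed.

Lemma shifted_mvt c x y : a <= x -> 0 < x -> x < y -> y <= b ->
  exists xi, x <= xi <= y /\
    shifted c y - shifted c x = (Df xi - c) * Rpower xi (alpha - 1) * (y - x).
Proof.
  intros Hx Hx0 Hxy Hy.
  destruct (mvt_continuous_on (fun s => f s + - (c / alpha) * Rpower s alpha)
    (fun s => (Df s - c) * Rpower s (alpha - 1)) x y Hxy) as [xi [Hxi Hm]].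
  - intros s Hs. apply is_derive_Reals.
    replace ((Df s - c) * Rpower s (alpha - 1))
      with (Df s * Rpower s (alpha - 1) + - (c / alpha) * (alpha * Rpower s (alpha - 1)))
      by (field; lra).
    apply (is_derive_plus f (fun s => - (c / alpha) * Rpower s alpha)).
    + apply is_derive_Reals, f_derivable. lra.
    + apply (is_derive_scal (fun s => Rpower s alpha)), is_derive_Rpower. lra.
  - apply continuous_on_plus; [apply f_continuous_on | apply continuous_on_Rpower]; lra.
  - exists xi. split; [exact Hxi |]. unfold shifted. rewrite <- Hm. ring.
Qed.

Lemma shifted_increasing c x y : a <= x -> 0 < x -> x <= y -> y <= b ->
  c <= Df x -> shifted c x <= shifted c y.
Proof.
  intros Hx Hx0 Hxy Hy Hc. destruct (Req_dec x y) as [-> | Hne]; [lra |].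
  destruct (shifted_mvt c x y) as [xi [Hxi Hm]]; try lra.
  assert (c <= Df xi) by (apply Rle_trans with (Df x); [exact Hc | apply HDf; lra]).
  pose proof (exp_pos ((alpha - 1) * ln xi)).
  assert (0 <= (Df xi - c) * Rpower xi (alpha - 1) * (y - x)).
  { apply Rmult_le_pos; [apply Rmult_le_pos |]; unfold Rpower; lra. }
  lra.
Qed.

Lemma shifted_decreasing c x y : a <= x -> 0 < x -> x <= y -> y <= b ->
  Df y <= c -> shifted c y <= shifted c x.
Proof.
  intros Hx Hx0 Hxy Hy Hc. destruct (Req_dec x y) as [-> | Hne]; [lra |].
  destruct (shifted_mvt c x y) as [xi [Hxi Hm]]; try lra.
  assert (Df xi <= c) by (apply Rle_trans with (Df y); [apply HDf; lra | exact Hc]).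
  pose proof (exp_pos ((alpha - 1) * ln xi)).
  assert (0 <= (c - Df xi) * Rpower xi (alpha - 1) * (y - x)).
  { apply Rmult_le_pos; [apply Rmult_le_pos |]; unfold Rpower; lra. }
  lra.
Qed.

Lemma Df_nonpos t : a < t < b -> Df t <= 0.
Proof.
  intros Ht. apply Rnot_lt_le. intros Hpos.
  assert (shifted (Df t) t <= shifted (Df t) b) by (apply shifted_increasing; lra).
  assert (f b <= f t) by (apply Hf; lra).
  assert (Rpower t alpha < Rpower b alpha) by (apply Rlt_Rpower_l; lra).
  assert (0 < Df t / alpha) by (apply Rdiv_lt_0_compat; lra).
  unfold shifted in *. nra.
Qed.

Lemma f_ge_tangent t s : a < t < b -> a < s <= b ->
  f t + Df t / alpha * (Rpower s alpha - Rpower t alpha) <= f s.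
Proof.
  intros Ht Hs.
  assert (shifted (Df t) t <= shifted (Df t) s); [| unfold shifted in *; lra].
  destruct (Rle_lt_dec t s).
  - apply shifted_increasing; lra.
  - apply shifted_decreasing; lra.
Qed.

Lemma f_le_chord s : a < s <= b ->
  f s <= f a + (f b - f a) / (rpow b alpha - rpow a alpha) * (Rpower s alpha - rpow a alpha).
Proof.
  intros Hs.
  set (A := rpow a alpha). set (B := rpow b alpha).
  assert (HAB : A < B) by (apply rpow_lt; lra).
  set (v := (f b - f a) / (B - A)).
  assert (Hshift : forall x, shifted (v * alpha) x = f x - v * Rpower x alpha).
  { intros x. unfold shifted. field. lra. }
  assert (HshiftB : shifted (v * alpha) b = f a - v * A).
  { rewrite Hshift, <- (rpow_pos b) by lra. fold B. unfold v. field. lra. }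
  enough (shifted (v * alpha) s <= f a - v * A) by (rewrite Hshift in *; lra).
  destruct (Rlt_le_dec (v * alpha) (Df s)) as [Hup | Hdown].
  - rewrite <- HshiftB. apply shifted_increasing; lra.
  - (* below [s] the shifted function decreases, and near [a] it is at most [f a - v x^al] *)
    apply (filterlim_le (F := at_right a) (fun _ => shifted (v * alpha) s)
      (fun x => f a - v * Rpower x alpha) (shifted (v * alpha) s) (f a - v * A)).
    + apply (filter_imp (fun x => a < x < s)); [| now apply at_right_below].
      intros x Hx. apply Rle_trans with (shifted (v * alpha) x); [apply shifted_decreasing; lra |].
      assert (f x <= f a) by (apply Hf; lra). rewrite Hshift. lra.
    + apply filterlim_const.
    + apply (filterlim_comp _ _ _ (fun x => Rpower x alpha) (fun X => f a - v * X)
        _ (locally A)); [apply Rpower_at_right; lra |].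
      apply (ex_derive_continuous (fun X => f a - v * X)). auto_derive. exact I.
Qed.

Lemma ex_RInt_weighted x y : a < x -> x <= y -> y <= b ->
  ex_RInt (fun s => f s * rpow s (alpha - 1)) x y.
Proof.
  intros Hx Hxy Hy. apply ex_RInt_continuous_on; [exact Hxy |].
  apply (continuous_on_ext _ (fun s => f s * (1 * Rpower s (alpha - 1)))).
  - intros s Hs. rewrite rpow_pos, Rmult_1_l by lra. reflexivity.
  - apply continuous_on_mult; [apply f_continuous_on | apply continuous_on_Rpower]; lra.
Qed.

Lemma RInt_weighted_ge u v x y : a < x -> x <= y -> y <= b ->
  (forall s, x <= s <= y -> u + v * Rpower s alpha <= f s) ->
  affine_power_integral alpha u v (Rpower x alpha) (Rpower y alpha)
    <= RInt (fun s => f s * rpow s (alpha - 1)) x y.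
Proof.
  intros Hx Hxy Hy Hle.
  pose proof (is_RInt_affine_power alpha u v x y ltac:(lra) ltac:(lra)) as Hint.
  rewrite <- (is_RInt_unique _ _ _ _ Hint).
  apply RInt_le; [exact Hxy | eexists; exact Hint | apply ex_RInt_weighted; lra |].
  intros s Hs. rewrite rpow_pos by lra.
  apply Rmult_le_compat_r; [left; apply exp_pos | apply Hle; lra].
Qed.

Lemma RInt_weighted_le u v x y : a < x -> x <= y -> y <= b ->
  (forall s, x <= s <= y -> f s <= u + v * Rpower s alpha) ->
  RInt (fun s => f s * rpow s (alpha - 1)) x y
    <= affine_power_integral alpha u v (Rpower x alpha) (Rpower y alpha).
Proof.
  intros Hx Hxy Hy Hle.
  pose proof (is_RInt_affine_power alpha u v x y ltac:(lra) ltac:(lra)) as Hint.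
  rewrite <- (is_RInt_unique _ _ _ _ Hint).
  apply RInt_le; [exact Hxy | apply ex_RInt_weighted; lra | eexists; exact Hint |].
  intros s Hs. rewrite rpow_pos by lra.
  apply Rmult_le_compat_r; [left; apply exp_pos | apply Hle; lra].
Qed.

Lemma weighted_integral_cvg : exists I,
  filterlim (fun x => RInt (fun s => f s * rpow s (alpha - 1)) x b) (at_right a) (locally I).
Proof.
  set (g := fun s => f s * rpow s (alpha - 1)).
  set (B := Rpower b alpha).
  (* subtracting the integral of the lower bound [f b] leaves a nonincreasing function of [x] *)
  set (K := fun x => RInt g x b - affine_power_integral alpha (f b) 0 (Rpower x alpha) B).
  assert (Hfab : f b <= f a) by (apply Hf; lra).
  assert (Hmono : forall x y, a < x -> x <= y -> y < b -> K y <= K x).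
  { intros x y Hx Hxy Hy. unfold K.
    rewrite <- (RInt_Chasles g x y b) by (apply ex_RInt_weighted; lra).
    pose proof (RInt_weighted_ge (f b) 0 x y Hx Hxy ltac:(lra)) as Hle.
    assert (Hsplit : affine_power_integral alpha (f b) 0 (Rpower x alpha) B =
      affine_power_integral alpha (f b) 0 (Rpower x alpha) (Rpower y alpha)
      + affine_power_integral alpha (f b) 0 (Rpower y alpha) B)
      by (unfold affine_power_integral; field; lra).
    unfold plus; simpl. rewrite Hsplit. fold g in Hle.
    enough (affine_power_integral alpha (f b) 0 (Rpower x alpha) (Rpower y alpha) <= RInt g x y)
      by lra.
    apply Hle. intros s Hs. assert (f b <= f s) by (apply Hf; lra). lra. }
  assert (Hbound : forall x, a < x < b -> K x <= (f a - f b) * B / alpha).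
  { intros x Hx. unfold K.
    pose proof (RInt_weighted_le (f a) 0 x b ltac:(lra) ltac:(lra) (Rle_refl _)) as Hle.
    fold g B in Hle.
    assert (RInt g x b <= affine_power_integral alpha (f a) 0 (Rpower x alpha) B).
    { apply Hle. intros s Hs. assert (f s <= f a) by (apply Hf; lra). lra. }
    pose proof (exp_pos (alpha * ln x)).
    assert (0 <= (f a - f b) * Rpower x alpha / alpha).
    { apply Rmult_le_pos; [apply Rmult_le_pos; unfold Rpower; lra |].
      left; apply Rinv_0_lt_compat; lra. }
    assert (affine_power_integral alpha (f a) 0 (Rpower x alpha) B
      - affine_power_integral alpha (f b) 0 (Rpower x alpha) B
      = (f a - f b) * B / alpha - (f a - f b) * Rpower x alpha / alpha)
      by (unfold affine_power_integral; field; lra).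
    lra. }
  destruct (antitone_at_right_cvg K a b _ Hab Hmono Hbound) as [S HS].
  exists (S + affine_power_integral alpha (f b) 0 (rpow a alpha) B).
  apply (filterlim_ext (fun x => K x + affine_power_integral alpha (f b) 0 (Rpower x alpha) B)).
  { intros x. unfold K. ring. }
  apply (filterlim_comp_2 K _ Rplus HS
    (affine_power_integral_at_right alpha (f b) 0 a B Ha (proj1 Halpha)) (filterlim_plus _ _)).
Qed.

Lemma weighted_integral_ge u v I :
  filterlim (fun x => RInt (fun s => f s * rpow s (alpha - 1)) x b) (at_right a) (locally I) ->
  (forall s, a < s <= b -> u + v * Rpower s alpha <= f s) ->
  affine_power_integral alpha u v (rpow a alpha) (rpow b alpha) <= I.
Proof.
  intros HI Hle. rewrite (rpow_pos b) by lra.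
  apply (filterlim_le (F := at_right a)
    (fun x => affine_power_integral alpha u v (Rpower x alpha) (Rpower b alpha))
    (fun x => RInt (fun s => f s * rpow s (alpha - 1)) x b)
    (affine_power_integral alpha u v (rpow a alpha) (Rpower b alpha)) I);
    [| apply affine_power_integral_at_right; lra | exact HI].
  apply (filter_imp (fun x => a < x < b)); [| now apply at_right_below].
  intros x Hx. apply RInt_weighted_ge; try lra. intros s Hs. apply Hle. lra.
Qed.

Lemma weighted_integral_le u v I :
  filterlim (fun x => RInt (fun s => f s * rpow s (alpha - 1)) x b) (at_right a) (locally I) ->
  (forall s, a < s <= b -> f s <= u + v * Rpower s alpha) ->
  I <= affine_power_integral alpha u v (rpow a alpha) (rpow b alpha).
Proof.
  intros HI Hle. rewrite (rpow_pos b) by lra.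
  apply (filterlim_le (F := at_right a)
    (fun x => RInt (fun s => f s * rpow s (alpha - 1)) x b)
    (fun x => affine_power_integral alpha u v (Rpower x alpha) (Rpower b alpha))
    I (affine_power_integral alpha u v (rpow a alpha) (Rpower b alpha)));
    [| exact HI | apply affine_power_integral_at_right; lra].
  apply (filter_imp (fun x => a < x < b)); [| now apply at_right_below].
  intros x Hx. apply RInt_weighted_le; try lra. intros s Hs. apply Hle. lra.
Qed.

Lemma weighted_mean_ge_midpoint I :
  filterlim (fun x => RInt (fun s => f s * rpow s (alpha - 1)) x b) (at_right a) (locally I) ->
  f ((a + b) / 2) <= alpha / (rpow b alpha - rpow a alpha) * I.
Proof.
  intros HI. set (m := (a + b) / 2). set (A := rpow a alpha). set (B := rpow b alpha).
  assert (HAB : A < B) by (apply rpow_lt; lra).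
  set (k := Df m / alpha). set (Pm := Rpower m alpha).
  assert (Hk : k <= 0).
  { unfold k, Rdiv. pose proof (Df_nonpos m ltac:(unfold m; lra)).
    pose proof (Rinv_0_lt_compat alpha ltac:(lra)). nra. }
  assert (Hmid : (A + B) / 2 <= Pm).
  { unfold Pm. rewrite <- rpow_pos by (unfold m; lra). apply rpow_midpoint; lra. }
  pose proof (weighted_integral_ge (f m - k * Pm) k I HI) as Hlow.
  apply Rmult_le_compat_l with (r := alpha / (B - A)) in Hlow;
    [| apply Rlt_le, Rdiv_lt_0_compat; lra | intros s Hs;
       pose proof (f_ge_tangent m s ltac:(unfold m; lra) Hs) as Ht; fold k Pm in Ht; lra].
  fold A B in Hlow.
  rewrite (affine_power_integral_mean alpha _ _ A B (proj1 Halpha) (Rlt_not_eq _ _ HAB)) in Hlow.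
  assert (0 <= k * ((A + B) / 2 - Pm)) by nra.
  lra.
Qed.

Lemma weighted_mean_le_endpoints I :
  filterlim (fun x => RInt (fun s => f s * rpow s (alpha - 1)) x b) (at_right a) (locally I) ->
  alpha / (rpow b alpha - rpow a alpha) * I <= f b + f a - f ((a + b) / 2).
Proof.
  intros HI. set (m := (a + b) / 2). set (A := rpow a alpha). set (B := rpow b alpha).
  assert (HAB : A < B) by (apply rpow_lt; lra).
  set (v := (f b - f a) / (B - A)).
  assert (Hv : v * (B - A) = f b - f a) by (unfold v; field; lra).
  assert (Hv0 : v <= 0).
  { assert (f b <= f a) by (apply Hf; lra).
    unfold v, Rdiv. pose proof (Rinv_0_lt_compat (B - A) ltac:(lra)). nra. }
  pose proof (weighted_integral_le (f a - v * A) v I HI) as Hup.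
  apply Rmult_le_compat_l with (r := alpha / (B - A)) in Hup;
    [| apply Rlt_le, Rdiv_lt_0_compat; lra | intros s Hs;
       pose proof (f_le_chord s Hs) as Ht; fold A B v in Ht; lra].
  fold A B in Hup.
  rewrite (affine_power_integral_mean alpha _ _ A B (proj1 Halpha) (Rlt_not_eq _ _ HAB)) in Hup.
  assert (Hm : f m <= f a + v * (Rpower m alpha - A)) by (apply f_le_chord; unfold m; lra).
  assert (Hmid : (A + B) / 2 <= Rpower m alpha).
  { rewrite <- rpow_pos by (unfold m; lra). apply rpow_midpoint; lra. }
  assert (v * (Rpower m alpha - A) <= v * ((B - A) / 2)) by (apply Rmult_le_compat_neg_l; lra).
  lra.
Qed.

End ConformableConvex.

Theorem mainTheorem9 (alpha a b : R) (f Df : R -> R) :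
  0 < alpha <= 1 -> 0 <= a -> a < b ->
  conf_deriv_on a b alpha f Df ->
  (forall x y : R, a <= x -> x <= y -> y <= b -> Df x <= Df y) ->
  (forall x y : R, a <= x -> x <= y -> y <= b -> f y <= f x) ->
  exists I : R,
    is_RInt_gen (fun s => f s * rpow s (alpha - 1)) (at_right a) (at_point b) I /\
    f ((a + b) / 2) <= alpha / (rpow b alpha - rpow a alpha) * I /\
    alpha / (rpow b alpha - rpow a alpha) * I <= f b + f a - f ((a + b) / 2).
Proof.
  intros Halpha Ha Hab Hconf HDf Hf.
  destruct (weighted_integral_cvg alpha a b f Df Halpha Ha Hab Hconf Hf) as [I HI].
  exists I. split; [| split].
  - apply is_RInt_gen_at_right; [exact Hab | | exact HI].
    intros x Hx. apply (ex_RInt_weighted alpha a b f Df); auto; lra.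
  - now apply (weighted_mean_ge_midpoint alpha a b f Df).
  - now apply (weighted_mean_le_endpoints alpha a b f Df).
Qed.
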